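(* Let $\mathcal{M}$ be an $\mathcal{L}$-structure ($\mathcal{L}$ possibly many-sorted). Let $S$ and $\widetilde{S}$ be sorts and $f:\widetilde{S}\to S$ an $\mathcal{L}$-definable (without parameters) function with uniformly finite fibres: there is $N$ with $|f^{-1}(b)|\leq N$ for all $b\in S(\mathcal{M})$. Let $B\subseteq f(\widetilde{S}(\mathcal{M}))$ and $\widetilde{B} := f^{-1}(B)\subseteq\widetilde{S}(\mathcal{M})$. Let $A\subseteq\mathcal{M}^x$ and let $\phi(x,y)$ be an $\mathcal{L}$-formula with $y$ a variable of sort $S$, such that the formula $\phi(x;f(z))$ (with $z$ of sort $\widetilde{S}$) has a uniform strong honest definition on $A$ over $\widetilde{B}$. Then $\phi(x;y)$ has a uniform strong honest definition on $A$ over $B$.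
   Context: For a tuple of variables $x$ of sorts $S_1,\ldots,S_n$ and a set $C$ of elements of $\mathcal{M}$, $C^x := \prod_i(S_i(\mathcal{M})\cap C)$. For a formula $\phi(x;y)$, $b\in\mathcal{M}^x$ and a set $B_0$, $\operatorname{tp}_\phi(b/B_0)$ is the set of $\phi(x,c)$ for $c\in B_0^y$ with $\mathcal{M}\models\phi(b,c)$ and $\neg\phi(x,c)$ for $c\in B_0^y$ with $\mathcal{M}\models\neg\phi(b,c)$. For $\zeta(x;w)$ and $e$, ''$\zeta(x,e)\vdash\operatorname{tp}_\phi(b/B_0)$'' means every $b'\in\mathcal{M}^x$ with $\mathcal{M}\models\zeta(b',e)$ satisfies all formulas of $\operatorname{tp}_\phi(b/B_0)$. An $\mathcal{L}$-formula $\zeta(x;w)$ is a uniform strong honest definition for $\phi(x;y)$ on $A$ over $B$ if for every $a\in A$ and every finite $B_0\subseteq B$ with $|B_0|\geq 2$ there is $e\in B_0^w$ with $\mathcal{M}\models\zeta(a,e)$ and $\zeta(x,e)\vdash\operatorname{tp}_\phi(a/B_0)$. *)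

From Stdlib Require Import List.
Import ListNotations.
Set Implicit Arguments.

Record signature := Signature {
  sort : Type;
  fsym : Type;
  fargs : fsym -> list sort;
  fres : fsym -> sort;
  rsym : Type;
  rargs : rsym -> list sort }.

Fixpoint env {S : Type} (D : S -> Type) (l : list S) : Type :=
  match l with nil => unit | s :: l' => (D s * env D l')%type end.

Fixpoint happ {S : Type} (D : S -> Type) (l1 l2 : list S)
  : env D l1 -> env D l2 -> env D (l1 ++ l2) :=
  match l1 return env D l1 -> env D l2 -> env D (l1 ++ l2) with
  | nil => fun _ e2 => e2
  | s :: l => fun e1 e2 => (fst e1, happ D l l2 (snd e1) e2)
  end.

Fixpoint hall {S : Type} (D : S -> Type) (P : forall s, D s -> Prop) (l : list S)
  : env D l -> Prop :=
  match l return env D l -> Prop with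
  | nil => fun _ => True
  | s :: l' => fun e => P s (fst e) /\ hall D P l' (snd e)
  end.

Record structure (L : signature) := Structure {
  dom : sort L -> Type;
  finterp : forall f : fsym L, env dom (fargs L f) -> dom (fres L f);
  rinterp : forall r : rsym L, env dom (rargs L r) -> Prop }.

Section Syntax.
Variable L : signature.

Inductive var : list (sort L) -> sort L -> Type :=
| vz : forall G s, var (s :: G) s
| vs : forall G s t, var G s -> var (t :: G) s.

Inductive term (G : list (sort L)) : sort L -> Type :=
| tvar : forall s, var G s -> term G s
| tapp : forall f : fsym L, terms G (fargs L f) -> term G (fres L f)
with terms (G : list (sort L)) : list (sort L) -> Type :=
| tnil : terms G nil
| tcons : forall s l, term G s -> terms G l -> terms G (s :: l).

(** L-formulas with free variables in the context G (a tuple of sorted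
    variables); the other connectives/quantifiers are definable. *)
Inductive formula (G : list (sort L)) : Type :=
| fTrue : formula G
| feq : forall s, term G s -> term G s -> formula G
| frel : forall r : rsym L, terms G (rargs L r) -> formula G
| fneg : formula G -> formula G
| fand : formula G -> formula G -> formula G
| fex : forall s, formula (s :: G) -> formula G.

Variable M : structure L.

Fixpoint lookup G s (v : var G s) : env (dom M) G -> dom M s :=
  match v in var G s return env (dom M) G -> dom M s with
  | @vz _ _ => fun e => fst e
  | @vs _ _ _ v' => fun e => lookup v' (snd e)
  end.

Fixpoint teval G s (t : term G s) (e : env (dom M) G) : dom M s :=
  match t with
  | @tvar _ _ v => lookup v e
  | @tapp _ f ts => finterp M f (tseval ts e)
  end
with tseval G l (ts : terms G l) (e : env (dom M) G) : env (dom M) l :=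
  match ts in terms _ l return env (dom M) l with
  | @tnil _ => tt
  | @tcons _ _ _ t ts' => (teval t e, tseval ts' e)
  end.

Fixpoint sat G (phi : formula G) (e : env (dom M) G) : Prop :=
  match phi with
  | fTrue _ => True
  | feq t1 t2 => teval t1 e = teval t2 e
  | frel r ts => rinterp M r (tseval ts e)
  | fneg p => ~ sat p e
  | fand p q => sat p e /\ sat q e
  | @fex _ s p => exists d : dom M s, sat p (d, e)
  end.

Definition elt := {s : sort L & dom M s}.
Definition mset := elt -> Prop.

Definition sortset (s : sort L) (P : dom M s -> Prop) : mset :=
  fun p => exists a : dom M s, p = existT _ s a /\ P a.

(** Uniform strong honest definition, for phi(x;y) given by its
    interpretation [phi : M^x -> M^y -> Prop].  A finite subset B0 of B is
    given as a duplicate-free list of elements; |B0| = its length.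
    e in B0^w  <->  hall (fun s d => In (existT _ s d) B0) e.
    zeta(x,e) |- tp_phi(a/B0) is unfolded literally. *)
Definition ushd (x y : list (sort L)) (phi : env (dom M) x -> env (dom M) y -> Prop)
  (A : env (dom M) x -> Prop) (B : mset) : Prop :=
  exists (w : list (sort L)) (zeta : formula (x ++ w)),
    forall a : env (dom M) x, A a ->
    forall B0 : list elt, NoDup B0 -> (forall p, In p B0 -> B p) -> 2 <= length B0 ->
    exists e : env (dom M) w,
      hall (dom M) (fun s d => In (existT _ s d) B0) w e /\
      sat zeta (happ (dom M) x w a e) /\
      (forall b : env (dom M) x, sat zeta (happ (dom M) x w b e) ->
         forall c : env (dom M) y, hall (dom M) (fun s d => In (existT _ s d) B0) y c ->
           (phi b c <-> phi a c)).

End Syntax.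

Arguments ushd [L] M x y phi A B.
Arguments sortset [L] M s P _.

From Stdlib Require Import List Classical Eqdep Lia PeanoNat.
Import ListNotations.
Set Implicit Arguments.

(** Let ζ(x; z̄) be the honest definition of φ(x; f(z)) over f⁻¹(B), with z̄ of
    length n.  Given a finite B₀ ⊆ B, lift it to a set B̃₀ of preimages of the
    same size, take the parameters z̄ ∈ B̃₀ⁿ given for a, and use ȳ = f(z̄) ∈ B₀ⁿ
    instead.  The formula ∃z̄ (f(z̄) = ȳ ∧ ζ(x, z̄)) need not isolate tp_φ(a/B₀):
    another preimage z̄' of ȳ may be realised by some b of a different type.
    But ȳ has at most Nⁿ preimages, and each bad z̄' is excluded by one triple
    (c, u, v) of parameters from B₀: c is a point where such a b disagrees with
    a, and u = v holds iff φ(a, c), which two distinct points of B₀ make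
    possible.  The new honest definition says that some preimage z̄ of ȳ
    satisfies ζ(x, z̄) and that every realisation of ζ(x, z̄) satisfies
    φ(x, c) ↔ u = v for all the coded triples. *)

Fixpoint hmap {T : Type} {D1 D2 : T -> Type} (F : forall s, D1 s -> D2 s) (l : list T)
  : env D1 l -> env D2 l :=
  match l return env D1 l -> env D2 l with
  | nil => fun _ => tt
  | s :: l' => fun e => (F s (fst e), hmap F l' (snd e))
  end.

Section Tuples.
Context {T : Type} {D : T -> Type}.

Fixpoint hsplit (l1 l2 : list T) : env D (l1 ++ l2) -> env D l1 * env D l2 :=
  match l1 return env D (l1 ++ l2) -> env D l1 * env D l2 with
  | nil => fun e => (tt, e)
  | s :: l => fun e => let p := hsplit l l2 (snd e) in ((fst e, fst p), snd p)
  end.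

(* Unlike [fst] and [snd], these keep the sort list in the type of their
   argument, which [solve_projection] needs in order to recognise coordinates. *)
Definition hhead {s l} (e : env D (s :: l)) : D s := fst e.
Definition htail {s l} (e : env D (s :: l)) : env D l := snd e.

Definition hfst {l1 l2} (e : env D (l1 ++ l2)) : env D l1 := fst (hsplit l1 l2 e).
Definition hsnd {l1 l2} (e : env D (l1 ++ l2)) : env D l2 := snd (hsplit l1 l2 e).

Lemma hsplit_happ l1 l2 (a : env D l1) (b : env D l2) :
  hsplit l1 l2 (happ D l1 l2 a b) = (a, b).
Proof. induction l1; simpl; destruct a; [|rewrite IHl1]; reflexivity. Qed.

Lemma hall_happ (P : forall s, D s -> Prop) l1 l2 (a : env D l1) (b : env D l2) :
  hall D P l1 a -> hall D P l2 b -> hall D P (l1 ++ l2) (happ D l1 l2 a b).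
Proof. induction l1; simpl; [auto|]. intros [Ha1 Ha2] Hb; auto. Qed.

Fixpoint hmap_repeat {s t : T} (f : D s -> D t) n : env D (repeat s n) -> env D (repeat t n) :=
  match n return env D (repeat s n) -> env D (repeat t n) with
  | 0 => fun _ => tt
  | S n' => fun z => (f (fst z), hmap_repeat f n' (snd z))
  end.

Lemma hall_hmap_repeat {P Q : forall s, D s -> Prop} {s t} (f : D s -> D t)
  {n} {e : env D (repeat s n)} :
  (forall z, P s z -> Q t (f z)) ->
  hall D P (repeat s n) e -> hall D Q (repeat t n) (hmap_repeat f n e).
Proof. intros Hf; induction n; simpl; [auto|]. intros [H1 H2]; auto. Qed.

End Tuples.

Lemma fibre_cover {A B : Type} (f : A -> B) N
  (HN : forall b (l : list A), NoDup l -> (forall z, In z l -> f z = b) -> length l <= N) b :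
  exists l : list A, length l <= N /\ forall z, f z = b -> In z l.
Proof.
  assert (Hk : forall k, exists l, NoDup l /\ (forall z, In z l -> f z = b) /\
                 (length l = k \/ forall z, f z = b -> In z l)).
  { induction k as [|k [l [Hnd [Hl [Hlen|Hcov]]]]].
    - exists nil; repeat split; [constructor|contradiction|left; reflexivity].
    - destruct (classic (forall z, f z = b -> In z l)) as [Hcov|Hcov]; [exists l; auto|].
      apply not_all_ex_not in Hcov as [z Hz]; apply imply_to_and in Hz as [Hfz Hzl].
      exists (z :: l); repeat split; [constructor; auto| |left; simpl; congruence].
      intros z' [<-|Hz']; auto.
    - exists l; auto. }
  destruct (Hk (S N)) as [l [Hnd [Hl [Hlen|Hcov]]]]; specialize (HN b l Hnd Hl); [lia|eauto].
Qed.

Lemma fibre_cover_repeat {T : Type} {D : T -> Type} {s t} (f : D s -> D t) {N}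
  (HN : forall b (l : list (D s)), NoDup l -> (forall z, In z l -> f z = b) -> length l <= N) n :
  forall y : env D (repeat t n), exists l : list (env D (repeat s n)),
    length l <= N ^ n /\ forall z, hmap_repeat f n z = y -> In z l.
Proof.
  induction n as [|n IHn]; intros y.
  - exists [tt]; split; [simpl; lia|intros [] _; left; reflexivity].
  - destruct (fibre_cover f HN (fst y)) as [l1 [Hl1 Hcov1]].
    destruct (IHn (snd y)) as [l2 [Hl2 Hcov2]].
    exists (list_prod l1 l2); split.
    + eapply Nat.le_trans; [apply Nat.eq_le_incl, length_prod|apply Nat.mul_le_mono; assumption].
    + intros [z1 z2] <-; apply in_prod; auto.
Qed.

Scheme term_mut := Induction for term Sort Prop
with terms_mut := Induction for terms Sort Prop.
Combined Scheme term_terms_ind from term_mut, terms_mut.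

Section Renaming.
Variable L : signature.

Fixpoint hlookup {D : sort L -> Type} G s (v : var L G s) : env D G -> D s :=
  match v in var _ G s return env D G -> D s with
  | @vz _ _ _ => fun e => fst e
  | @vs _ _ _ _ v' => fun e => hlookup v' (snd e)
  end.

Fixpoint trename {G G'} (σ : env (var L G') G) s (t : term L G s) : term L G' s :=
  match t with
  | @tvar _ _ _ v => tvar (hlookup v σ)
  | @tapp _ _ f ts => tapp f (tsrename σ ts)
  end
with tsrename {G G'} (σ : env (var L G') G) l (ts : terms L G l) : terms L G' l :=
  match ts with
  | @tnil _ _ => tnil _ _
  | @tcons _ _ _ _ t ts' => tcons (trename σ t) (tsrename σ ts')
  end.

Definition rename_lift {G G'} (t : sort L) (σ : env (var L G') G)
  : env (var L (t :: G')) (t :: G) :=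
  (vz L G' t, hmap (fun s v => vs t v) G σ).

Fixpoint frename {G G'} (σ : env (var L G') G) (p : formula L G) : formula L G' :=
  match p with
  | @fTrue _ _ => fTrue _ _
  | @feq _ _ _ t1 t2 => feq (trename σ t1) (trename σ t2)
  | @frel _ _ r ts => frel r (tsrename σ ts)
  | @fneg _ _ q => fneg (frename σ q)
  | @fand _ _ q1 q2 => fand (frename σ q1) (frename σ q2)
  | @fex _ _ s q => fex (frename (rename_lift s σ) q)
  end.

Fixpoint rename_id G : env (var L G) G :=
  match G return env (var L G) G with
  | nil => tt
  | s :: G0 => rename_lift s (rename_id G0)
  end.

Variable M : structure L.

Fixpoint rename_env {G'} G : env (var L G') G -> env (dom M) G' -> env (dom M) G :=
  match G return env (var L G') G -> env (dom M) G' -> env (dom M) G with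
  | nil => fun _ _ => tt
  | s :: G0 => fun σ e' => (lookup M (fst σ) e', rename_env G0 (snd σ) e')
  end.

Lemma lookup_hlookup G' G s (v : var L G s) (σ : env (var L G') G) e' :
  lookup M (hlookup v σ) e' = lookup M v (rename_env G σ e').
Proof. induction v; simpl; auto. Qed.

Lemma rename_env_weaken G' G t (σ : env (var L G') G) (d : dom M t) e' :
  rename_env G (hmap (fun s v => vs t v) G σ) (d, e') = rename_env G σ e'.
Proof. induction G; simpl; [|rewrite IHG]; reflexivity. Qed.

Lemma rename_env_id G e : rename_env G (rename_id G) e = e.
Proof.
  induction G; simpl; destruct e; [reflexivity|].
  rewrite rename_env_weaken, IHG; reflexivity.
Qed.

Lemma teval_trename {G G'} (σ : env (var L G') G) e' :
  (forall s (t : term L G s), teval M (trename σ t) e' = teval M t (rename_env G σ e')) /\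
  (forall l (ts : terms L G l), tseval M (tsrename σ ts) e' = tseval M ts (rename_env G σ e')).
Proof.
  apply (term_terms_ind
    (fun s t => teval M (trename σ t) e' = teval M t (rename_env G σ e'))
    (fun l ts => tseval M (tsrename σ ts) e' = tseval M ts (rename_env G σ e')));
    simpl; intros; try congruence; apply lookup_hlookup.
Qed.

Lemma sat_frename G (p : formula L G) :
  forall G' (σ : env (var L G') G) e', sat M (frename σ p) e' <-> sat M p (rename_env G σ e').
Proof.
  induction p; intros; simpl.
  - tauto.
  - rewrite !(proj1 (teval_trename σ e')); tauto.
  - rewrite (proj2 (teval_trename σ e')); tauto.
  - rewrite IHp; tauto.
  - rewrite IHp1, IHp2; tauto.
  - split; intros [d Hd]; exists d; revert Hd; rewrite IHp; simpl; rewrite rename_env_weaken; auto.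
Qed.

End Renaming.

(** * Definable relations *)

Section Definability.
Variables (L : signature) (M : structure L).

Definition is_projection {G' G} (g : env (dom M) G' -> env (dom M) G) : Prop :=
  exists σ : env (var L G') G, forall e, g e = rename_env M G σ e.

Definition is_coordinate {G' s} (h : env (dom M) G' -> dom M s) : Prop :=
  exists v : var L G' s, forall e, h e = lookup M v e.

Definition definable {G} (P : env (dom M) G -> Prop) : Prop :=
  exists p : formula L G, forall e, sat M p e <-> P e.

Lemma projection_id G : is_projection (fun e : env (dom M) G => e).
Proof. exists (rename_id L G); intros; rewrite rename_env_id; reflexivity. Qed.

Lemma projection_nil G' : is_projection (fun _ : env (dom M) G' => (tt : env (dom M) nil)).
Proof. exists tt; reflexivity. Qed.

Lemma projection_cons G' G s (h : env (dom M) G' -> dom M s) (g : env (dom M) G' -> env (dom M) G) :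
  is_coordinate h -> is_projection g ->
  is_projection (fun e => ((h e, g e) : env (dom M) (s :: G))).
Proof.
  intros [v Hv] [σ Hσ]; exists ((v, σ) : env (var L G') (s :: G)); intros; simpl; congruence.
Qed.

Lemma coordinate_hhead G' G s (g : env (dom M) G' -> env (dom M) (s :: G)) :
  is_projection g -> is_coordinate (fun e => hhead (g e)).
Proof. intros [σ Hσ]; exists (fst σ); intros; rewrite Hσ; reflexivity. Qed.

Lemma projection_htail G' G s (g : env (dom M) G' -> env (dom M) (s :: G)) :
  is_projection g -> is_projection (fun e => htail (g e)).
Proof. intros [σ Hσ]; exists (snd σ); intros; rewrite Hσ; reflexivity. Qed.

Lemma projection_comp G1 G2 G3 (g : env (dom M) G2 -> env (dom M) G3)
  (h : env (dom M) G1 -> env (dom M) G2) :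
  is_projection g -> is_projection h -> is_projection (fun e => g (h e)).
Proof.
  intros [σ Hσ] [τ Hτ]; exists (hmap (fun s v => hlookup v τ) G3 σ); intros e.
  rewrite Hσ, Hτ; clear; induction G3; simpl; [|rewrite IHG3, lookup_hlookup]; reflexivity.
Qed.

Lemma projection_happ G' G1 G2 (g1 : env (dom M) G' -> env (dom M) G1)
  (g2 : env (dom M) G' -> env (dom M) G2) :
  is_projection g1 -> is_projection g2 -> is_projection (fun e => happ _ G1 G2 (g1 e) (g2 e)).
Proof.
  intros [σ1 H1] [σ2 H2]; exists (happ _ G1 G2 σ1 σ2); intros e; rewrite H1, H2; clear.
  induction G1; simpl; [|rewrite IHG1]; reflexivity.
Qed.

Lemma projection_hfst G' G1 G2 (g : env (dom M) G' -> env (dom M) (G1 ++ G2)) :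
  is_projection g -> is_projection (fun e => hfst (g e)).
Proof.
  intros Hg; apply (projection_comp (g := fun E => hfst E)); [clear g Hg|exact Hg].
  induction G1; simpl; [apply projection_nil|].
  apply projection_cons; [apply coordinate_hhead, projection_id|].
  exact (projection_comp IHG1 (projection_htail (projection_id _))).
Qed.

Lemma projection_hsnd G' G1 G2 (g : env (dom M) G' -> env (dom M) (G1 ++ G2)) :
  is_projection g -> is_projection (fun e => hsnd (g e)).
Proof.
  intros Hg; apply (projection_comp (g := fun E => hsnd E)); [clear g Hg|exact Hg].
  induction G1; [apply projection_id|].
  exact (projection_comp IHG1 (projection_htail (projection_id _))).
Qed.

Lemma definable_ext G (P Q : env (dom M) G -> Prop) :
  (forall e, P e <-> Q e) -> definable P -> definable Q.
Proof. intros HPQ [p Hp]; exists p; intros; rewrite Hp; auto. Qed.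

Lemma definable_true G : definable (fun _ : env (dom M) G => True).
Proof. exists (fTrue _ _); simpl; tauto. Qed.

Lemma definable_sat G' G (p : formula L G) (g : env (dom M) G' -> env (dom M) G) :
  is_projection g -> definable (fun e => sat M p (g e)).
Proof. intros [σ Hσ]; exists (frename σ p); intros; rewrite sat_frename, Hσ; tauto. Qed.

Lemma definable_eq G s (h1 h2 : env (dom M) G -> dom M s) :
  is_coordinate h1 -> is_coordinate h2 -> definable (fun e => h1 e = h2 e).
Proof.
  intros [v1 H1] [v2 H2]; exists (feq (tvar v1) (tvar v2)); intros; simpl; rewrite H1, H2; tauto.
Qed.

Lemma definable_and G (P Q : env (dom M) G -> Prop) :
  definable P -> definable Q -> definable (fun e => P e /\ Q e).
Proof. intros [p Hp] [q Hq]; exists (fand p q); intros; simpl; rewrite Hp, Hq; tauto. Qed.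

Lemma definable_not G (P : env (dom M) G -> Prop) :
  definable P -> definable (fun e => ~ P e).
Proof. intros [p Hp]; exists (fneg p); intros; simpl; rewrite Hp; tauto. Qed.

Lemma definable_imp G (P Q : env (dom M) G -> Prop) :
  definable P -> definable Q -> definable (fun e => P e -> Q e).
Proof.
  intros HP HQ; apply (definable_ext (P := fun e => ~ (P e /\ ~ Q e))).
  - intros e; split; [intros H HPe; apply NNPP|]; tauto.
  - apply definable_not, definable_and, definable_not; assumption.
Qed.

Lemma definable_iff G (P Q : env (dom M) G -> Prop) :
  definable P -> definable Q -> definable (fun e => P e <-> Q e).
Proof. intros HP HQ; apply definable_and; apply definable_imp; assumption. Qed.

Lemma definable_exists {D G} (P : env (dom M) D -> env (dom M) G -> Prop) :
  definable (fun E => P (hfst E) (hsnd E)) -> definable (fun e => exists d, P d e).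
Proof.
  revert P; induction D as [|s D IHD]; intros P [p Hp].
  - exists p; intros e; rewrite Hp; split; [exists tt; assumption|intros [[] H]; exact H].
  - apply (definable_ext (P := fun e => exists d' d1, P (d1, d') e)).
    + intros e; split;
        [intros [d' [d1 H]]; exists (d1, d')|intros [[d1 d'] H]; exists d', d1]; exact H.
    + apply IHD; exists (fex p); intros E; simpl.
      split; intros [d1 H]; exists d1; [apply Hp in H|apply Hp]; exact H.
Qed.

Lemma definable_forall {D G} (P : env (dom M) D -> env (dom M) G -> Prop) :
  definable (fun E => P (hfst E) (hsnd E)) -> definable (fun e => forall d, P d e).
Proof.
  intros HP; apply (definable_ext (P := fun e => ~ exists d, ~ P d e)).
  - intros e; split; [intros H d; apply NNPP; intros Hd; eauto|intros H [d Hd]; auto].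
  - apply definable_not, (definable_exists (fun d e => ~ P d e)), definable_not, HP.
Qed.

End Definability.

Ltac solve_projection :=
  repeat first [ assumption | apply projection_hfst | apply projection_hsnd | apply projection_happ
               | apply projection_cons | apply projection_nil | apply coordinate_hhead
               | apply projection_htail | apply projection_id ].

(** * Coding a φ-type by parameters *)

Fixpoint triples {T : Type} (s : T) m : list T :=
  match m with 0 => nil | S m' => s :: s :: s :: triples s m' end.

Section TypeCode.
Context {L : signature} {M : structure L} {x : list (sort L)} {S : sort L}.
Variable P : env (dom M) x -> dom M S -> Prop.

Fixpoint matches_code m (b : env (dom M) x) : env (dom M) (triples S m) -> Prop :=
  match m return env (dom M) (triples S m) -> Prop with
  | 0 => fun _ => True
  | Datatypes.S m' => fun t =>
      (P b (hhead t) <-> hhead (htail t) = hhead (htail (htail t))) /\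
      matches_code m' b (htail (htail (htail t)))
  end.

Variables (B0 : list (elt M)) (a : env (dom M) x).
Context {d0 d1 : dom M S}.
Hypotheses (Hd : d0 <> d1) (Hd0 : In (existT _ S d0) B0) (Hd1 : In (existT _ S d1) B0).

Definition same_type (b : env (dom M) x) : Prop :=
  forall c, In (existT _ S c) B0 -> (P b c <-> P a c).

Lemma truth_code (p : Prop) : exists v, In (existT _ S v) B0 /\ (p <-> d0 = v).
Proof.
  destruct (classic p) as [Hp|Hp]; [exists d0|exists d1]; split; auto; tauto.
Qed.

Lemma separating_triple (C : env (dom M) x -> Prop) :
  exists c u v, In (existT _ S c) B0 /\ In (existT _ S u) B0 /\ In (existT _ S v) B0 /\
    (forall b, same_type b -> (P b c <-> u = v)) /\
    ((forall b, C b -> (P b c <-> u = v)) -> forall b, C b -> same_type b).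
Proof.
  assert (Hc : exists c, In (existT _ S c) B0 /\
     ((forall b, C b -> same_type b) \/ exists b, C b /\ ~ (P b c <-> P a c))).
  { destruct (classic (forall b, C b -> same_type b)) as [Hall|Hall]; [exists d0; auto|].
    apply not_all_ex_not in Hall as [b0 Hb]; apply imply_to_and in Hb as [HCb Hb].
    apply not_all_ex_not in Hb as [c Hc]; apply imply_to_and in Hc as [Hc Hbc].
    exists c; split; [exact Hc|right; eauto]. }
  destruct Hc as [c [Hc Hsep]]; destruct (truth_code (P a c)) as [v [Hv Hac]].
  exists c, d0, v; do 3 (split; [assumption|]); split.
  - intros b Hb; rewrite (Hb c Hc); exact Hac.
  - intros Hcode; destruct Hsep as [Hall|[b [HCb Hbc]]]; [exact Hall|].
    exfalso; apply Hbc; rewrite (Hcode b HCb); symmetry; exact Hac.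
Qed.

Lemma separating_code m (Cs : list (env (dom M) x -> Prop)) : length Cs <= m ->
  exists t, hall (dom M) (fun s d => In (existT _ s d) B0) (triples S m) t /\
    (forall b, same_type b -> matches_code m b t) /\
    (forall C, In C Cs -> (forall b, C b -> matches_code m b t) -> forall b, C b -> same_type b).
Proof.
  revert Cs; induction m as [|m IHm]; intros Cs Hlen.
  - destruct Cs; [|simpl in Hlen; lia].
    exists tt; split; [exact I|split; [intros; exact I|intros C []]].
  - set (C0 := hd (fun _ => False) Cs).
    destruct (IHm (tl Cs)) as [t [Ht [Hgood Hsep]]]; [destruct Cs; simpl in *; lia|].
    destruct (separating_triple C0) as [c [u [v [Hc [Hu [Hv [Hgood0 Hsep0]]]]]]].
    exists (c, (u, (v, t))); split; [simpl; tauto|split].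
    + intros b Hb; split; [apply Hgood0|apply Hgood]; exact Hb.
    + intros C HC Hcode.
      assert (HCs : C = C0 \/ In C (tl Cs)) by (subst C0; destruct Cs; simpl in *; intuition).
      destruct HCs as [->|HC']; [apply Hsep0|apply Hsep; [exact HC'|]];
        intros b Hb; apply Hcode, Hb.
Qed.

End TypeCode.

Section Refinement.
Context {L : signature} {M : structure L} {S St : sort L} {f : dom M St -> dom M S}.
Context {theta : formula L [St; S]}.
Hypothesis Hdef : forall z y, sat M theta (z, (y, tt)) <-> f z = y.
Context {x : list (sort L)} (phi : formula L (x ++ [S])).

Let P b c := sat M phi (happ (dom M) x [S] b (c, tt)).

Lemma definable_hmap_repeat_eq G n (g : env (dom M) G -> env (dom M) (repeat St n))
  (h : env (dom M) G -> env (dom M) (repeat S n)) :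
  is_projection M g -> is_projection M h -> definable M (fun e => hmap_repeat f n (g e) = h e).
Proof.
  revert g h; induction n as [|n IHn]; intros g h Hg Hh; simpl.
  - apply (definable_ext (P := fun _ => True)); [|apply definable_true].
    intros e; destruct (h e); split; trivial.
  - apply (definable_ext (P := fun e => sat M theta (hhead (g e), (hhead (h e), tt)) /\
                                        hmap_repeat f n (htail (g e)) = htail (h e))).
    + intros e; unfold hhead, htail; rewrite Hdef; destruct (h e); simpl.
      split; [intros [-> ->]|intros Heq; inversion Heq]; auto.
    + apply definable_and; [apply definable_sat|apply IHn]; solve_projection.
Qed.

Lemma definable_matches_code G m (gb : env (dom M) G -> env (dom M) x)
  (gt : env (dom M) G -> env (dom M) (triples S m)) :
  is_projection M gb -> is_projection M gt -> definable M (fun e => matches_code P m (gb e) (gt e)).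
Proof.
  revert gt; induction m as [|m IHm]; intros gt Hb Ht; simpl; [apply definable_true|].
  apply definable_and; [apply definable_iff; [apply definable_sat|apply definable_eq]|apply IHm];
    solve_projection.
Qed.

Context {n : nat} (m : nat) (zeta : formula L (x ++ repeat St n)).

Definition refined (b : env (dom M) x) (y : env (dom M) (repeat S n))
  (t : env (dom M) (triples S m)) : Prop :=
  exists z, hmap_repeat f n z = y /\ sat M zeta (happ _ x _ b z) /\
    forall b', sat M zeta (happ _ x _ b' z) -> matches_code P m b' t.

Lemma refined_formula : exists zeta' : formula L (x ++ (repeat S n ++ triples S m)),
  forall b y t, sat M zeta' (happ _ x _ b (happ _ _ _ y t)) <-> refined b y t.
Proof.
  assert (Hdefinable : definable M (fun E => refined (hfst E) (hfst (hsnd E)) (hsnd (hsnd E)))).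
  { apply definable_exists; apply definable_and; [|apply definable_and].
    - apply definable_hmap_repeat_eq; solve_projection.
    - apply definable_sat; solve_projection.
    - apply definable_forall; apply definable_imp;
        [apply definable_sat|apply definable_matches_code]; solve_projection. }
  destruct Hdefinable as [zeta' Hzeta']; exists zeta'; intros b y t.
  rewrite Hzeta'; unfold hfst, hsnd; rewrite hsplit_happ; simpl; rewrite hsplit_happ; reflexivity.
Qed.

End Refinement.

Section FiniteSubsets.
Context {L : signature} {M : structure L}.

Lemma sortset_two_points {s} {B : dom M s -> Prop} {B0 : list (elt M)} :
  NoDup B0 -> (forall p, In p B0 -> sortset M s B p) -> 2 <= length B0 ->
  exists d0 d1 : dom M s, d0 <> d1 /\ In (existT _ s d0) B0 /\ In (existT _ s d1) B0.
Proof.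
  intros Hnd Hsub Hlen; destruct B0 as [|p0 [|p1 B0]]; simpl in Hlen; try lia.
  destruct (Hsub p0) as [d0 [-> _]]; [simpl; auto|].
  destruct (Hsub p1) as [d1 [-> _]]; [simpl; auto|].
  exists d0, d1; split; [|simpl; auto].
  intros ->; inversion Hnd as [|? ? Hnotin]; apply Hnotin; left; reflexivity.
Qed.

Lemma sortset_hall_repeat {s} {B : dom M s -> Prop} {B0 : list (elt M)} {w} {e : env (dom M) w} :
  (forall p, In p B0 -> sortset M s B p) ->
  hall (dom M) (fun s' d => In (existT _ s' d) B0) w e -> exists n, w = repeat s n.
Proof.
  intros Hsub; induction w as [|s' w IHw]; [exists 0; reflexivity|].
  intros [Hin Hall]; destruct (IHw _ Hall) as [n ->].
  destruct (Hsub _ Hin) as [d [Hd _]]; apply (f_equal (@projT1 _ _)) in Hd; simpl in Hd.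
  exists (S n); rewrite Hd; reflexivity.
Qed.

Lemma sortset_lift {s t} (f : dom M t -> dom M s) {B : dom M s -> Prop}
  (HB : forall b, B b -> exists z, f z = b) {B0 : list (elt M)} :
  NoDup B0 -> (forall p, In p B0 -> sortset M s B p) ->
  exists Bt : list (elt M), NoDup Bt /\ (forall p, In p Bt -> sortset M t (fun z => B (f z)) p) /\
    length Bt = length B0 /\
    (forall z, In (existT _ t z) Bt -> In (existT _ s (f z)) B0) /\
    (forall c, In (existT _ s c) B0 -> exists2 z, In (existT _ t z) Bt & f z = c).
Proof.
  induction B0 as [|p B0 IH]; intros Hnd Hsub.
  - exists nil; repeat split; try constructor; simpl; tauto.
  - apply NoDup_cons_iff in Hnd as [Hp Hnd].
    destruct (Hsub p (or_introl eq_refl)) as [b [-> Hb]]; destruct (HB b Hb) as [z <-].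
    destruct IH as [Bt [HndBt [HsubBt [Hlen [Hmaps Hcover]]]]];
      [exact Hnd|intros q Hq; apply Hsub; right; exact Hq|].
    exists (existT _ t z :: Bt); split; [|split; [|split; [|split]]].
    + constructor; [intros Hz; apply Hp, Hmaps, Hz|exact HndBt].
    + intros q [<-|Hq]; [exists z; auto|auto].
    + simpl; congruence.
    + intros z' [Hz'|Hz']; [apply inj_pair2 in Hz' as ->; left; reflexivity|right; auto].
    + intros c [Hc|Hc]; [apply inj_pair2 in Hc as <-; exists z; [left|]; reflexivity|].
      destruct (Hcover c Hc) as [z' Hz' Hfz']; exists z'; [right|]; assumption.
Qed.

End FiniteSubsets.

Theorem lemma3p6 (L : signature) (M : structure L) (S St : sort L)
  (f : dom M St -> dom M S)
  (* f is L-definable without parameters, by theta(z,y) *)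
  (theta : formula L [St; S])
  (Hdef : forall (z : dom M St) (y : dom M S), sat M theta (z, (y, tt)) <-> f z = y)
  (* uniformly finite fibres *)
  (Hfin : exists N : nat, forall (b : dom M S) (l : list (dom M St)),
      NoDup l -> (forall z, In z l -> f z = b) -> length l <= N)
  (B : dom M S -> Prop) (HB : forall b, B b -> exists z, f z = b)
  (x : list (sort L)) (A : env (dom M) x -> Prop)
  (phi : formula L (x ++ [S]))
  (H : ushd M x [St]
         (fun a c => sat M phi (happ (dom M) x [S] a (f (fst c), tt)))
         A (sortset M St (fun z => B (f z)))) :
  ushd M x [S] (fun a c => sat M phi (happ (dom M) x [S] a c)) A (sortset M S B).
Proof.
  destruct H as [w [zeta Hzeta]]; destruct Hfin as [N HN].
  destruct (classic (exists n, w = repeat St n)) as [[n ->]|Hw].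
  (* The parameters range over elements of sort St only, so for any other
     parameter sorts the hypothesis H cannot be instantiated. *)
  2: { exists [], (fTrue _ _); intros a Ha B0 Hnd Hsub Hlen; exfalso.
       destruct (sortset_lift f HB Hnd Hsub) as [Bt [HndBt [HsubBt [HlenBt _]]]].
       destruct (Hzeta a Ha Bt HndBt HsubBt ltac:(lia)) as [e [He _]].
       exact (Hw (sortset_hall_repeat HsubBt He)). }
  destruct (refined_formula Hdef phi (N ^ n) zeta) as [zeta' Hzeta'].
  exists (repeat S n ++ triples S (N ^ n)), zeta'; intros a Ha B0 Hnd Hsub Hlen.
  destruct (sortset_lift f HB Hnd Hsub) as [Bt [HndBt [HsubBt [HlenBt [Hmaps Hcover]]]]].
  destruct (Hzeta a Ha Bt HndBt HsubBt ltac:(lia)) as [e [He [Hae Hiso]]].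
  destruct (sortset_two_points Hnd Hsub Hlen) as [d0 [d1 [Hd [Hd0 Hd1]]]].
  destruct (fibre_cover_repeat f HN n (hmap_repeat f n e)) as [Lz [HLz Hcover_fibre]].
  destruct (separating_code (fun b c => sat M phi (happ _ x [S] b (c, tt))) B0 a Hd Hd0 Hd1
              (m := N ^ n) (map (fun z b => sat M zeta (happ _ x _ b z)) Lz))
    as [t [Ht [Hgood Hsep]]];
    [rewrite length_map; exact HLz|].
  exists (happ _ _ _ (hmap_repeat f n e) t); split; [|split].
  - apply hall_happ; [exact (hall_hmap_repeat f Hmaps He)|exact Ht].
  - apply Hzeta'; exists e; split; [reflexivity|split; [exact Hae|]].
    intros b Hb; apply Hgood; intros c Hc; destruct (Hcover c Hc) as [z Hz <-].
    exact (Hiso b Hb (z, tt) (conj Hz I)).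
  - intros b Hb [c []] [Hc _]; apply Hzeta' in Hb as [z [Hzy [Hbz Hcode]]].
    exact (Hsep _ (in_map _ _ _ (Hcover_fibre z Hzy)) Hcode b Hbz c Hc).
Qed.
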